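(* Let $(X,T)$ be a topologically transitive topological dynamical system in which $X$ is a compact metric totally disconnected space, and let $0<\theta<1$. Then $\exp(2\pi i\theta)$ is a continuous eigenvalue of $T$ if and only if there exists a clopen set $U\subseteq X$ such that $1_U-\theta\cdot\mathbf 1$ is a real coboundary, i.e. $1_U-\theta\cdot \mathbf 1=F-F\circ T$ for some $F\in C(X,\mathbb R)$. Moreover, for such a clopen set $U$ one has $\mu(U)=\theta$ for every $T$-invariant Borel probability measure $\mu$ on $X$.
   Context: A topological dynamical system $(X,T)$ is a compact metric space $X$ with a homeomorphism $T$; it is topologically transitive if some point has a dense orbit. A complex number $\lambda$ is a continuous eigenvalue of $T$ if there is a continuous $f:X\to\mathbb S^1$ (equivalently a nonzero continuous $f:X\to\mathbb C$) with $f\circ T=\lambda f$. $1_U$ denotes the indicator function of $U$ and $\mathbf 1$ the constant function $1$. *)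

From HB Require Import structures.
From mathcomp Require Import all_boot all_order all_algebra.
From mathcomp Require Import all_classical all_reals all_analysis.
From mathcomp Require Import complex.
Import Order.TTheory GRing.Theory Num.Theory.
Import numFieldNormedType.Exports.
Local Open Scope ring_scope.
Local Open Scope classical_set_scope.

Set Implicit Arguments.
Unset Strict Implicit.
Unset Printing Implicit Defensive.

Definition homeomorphism {X : topologicalType} (T : X -> X) : Prop :=
  continuous T /\
  exists S : X -> X, [/\ continuous S, cancel T S & cancel S T].

(* full (two-sided) orbit of x under the invertible map T :
   { T^n x : n in Z } = { y | y = T^n x or x = T^n y, n in N } *)
Definition orbit {X : Type} (T : X -> X) (x : X) : set X :=
  [set y | exists n : nat, y = iter n T x \/ x = iter n T y].

Definition top_transitive {X : topologicalType} (T : X -> X) : Prop :=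
  exists x : X, closure (orbit T x) = [set: X].

Definition ccontinuous {R : realType} {X : topologicalType}
  (f : X -> R[i]) : Prop :=
  continuous ((fun x => complex.Re (f x)) : X -> R) /\
  continuous ((fun x => complex.Im (f x)) : X -> R).

Definition continuous_eigenvalue {R : realType} {X : topologicalType}
  (T : X -> X) (lambda : R[i]) : Prop :=
  exists f : X -> R[i],
    [/\ ccontinuous f, (forall x, `|f x| = 1) &
        forall x, f (T x) = lambda * f x].

Definition expi2pi {R : realType} (theta : R) : R[i] :=
  Complex (cos (2 * pi * theta)) (sin (2 * pi * theta)).

Definition real_coboundary {R : realType} {X : topologicalType}
  (T : X -> X) (g : X -> R) : Prop :=
  exists F : X -> R, continuous F /\ forall x, g x = F x - F (T x).

Definition borel_type (X : ptopologicalType) := g_sigma_algebraType (@open X).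

Definition T_invariant {R : realType} {X : ptopologicalType}
  (T : X -> X) (mu : probability (borel_type X) R) : Prop :=
  forall A : set (borel_type X), measurable A ->
    mu (T @^-1` A) = mu A.

(* A compact Hausdorff totally disconnected space is zero-dimensional, because
   there the quasi-component of a point (the intersection of its clopen
   neighbourhoods) is connected.  On such a space a continuous f : X -> S^1 has
   a continuous lift g, f = exp(2 pi i g), with values in (-d, 1 + d): lift
   locally with atan and glue the local lifts along a finite clopen cover.  If f
   is an eigenfunction for exp(2 pi i theta), then g o T - g - theta is
   continuous and integer valued, and for small d it only takes the values 0
   and -1; so U := [g o T - g - theta = -1] is clopen and 1_U - theta = g - g o T.
   Conversely exp(2 pi i F) is an eigenfunction when 1_U - theta = F - F o T.
   Finally the Birkhoff sums of 1_U - theta equal F - F o T^n, hence are bounded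
   by 2 sup |F|; integrating them against an invariant probability mu gives
   n (mu U - theta) = O(1), so mu U = theta. *)

From HB Require Import structures.
From mathcomp Require Import all_boot all_order all_algebra.
From mathcomp Require Import all_classical all_reals all_analysis.
From mathcomp Require Import complex.
From mathcomp Require Import finmap lra ring zify measurable_realfun.
Import Order.TTheory GRing.Theory Num.Theory.
Import numFieldNormedType.Exports.
Local Open Scope ring_scope.
Local Open Scope classical_set_scope.
Set Implicit Arguments.
Unset Strict Implicit.
Unset Printing Implicit Defensive.

Section QuasiComponent.
Context {X : topologicalType}.
Hypotheses (hX : hausdorff_space X) (cX : compact [set: X]).

Definition quasi_component (x : X) : set X :=
  [set y | forall C, clopen C -> C x -> C y].

Lemma quasi_component_closed x : closed (quasi_component x).
Proof.
move=> y Qy C [oC cC] Cx; rewrite (closure_id C).1 //.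
by apply: closureS Qy => z; apply.
Qed.

Lemma clopen_sub_open_quasi_component x (O : set X) : open O ->
  quasi_component x `<=` O -> exists C, [/\ clopen C, C x & C `<=` O].
Proof.
move=> oO QO; apply: contrapT => noC.
pose F := filter_from [set C | clopen C /\ C x] (fun C => C `&` ~` O).
have PF : ProperFilter F.
  apply: filter_from_proper; last first.
    move=> C [cC Cx]; apply: contrapT => CO0; apply: noC; exists C; split=> // y Cy.
    by apply: contrapT => Oy; apply: CO0; exists y.
  apply: filter_from_filter; first by exists setT; split=> //; exact: clopenT.
  move=> C1 C2 [c1 x1] [c2 x2]; exists (C1 `&` C2); first by split=> //; exact: clopenI.
  by move=> y [[? ?] ?].
have [z [_]] := cX PF filterT; rewrite clusterE => Fz.
have closed_Fz A : closed A -> F A -> A z by move=> cA /Fz; rewrite -(closure_id A).1.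
apply: (closed_Fz (~` O)); first exact: open_closedC.
  by exists setT; [split=> //; exact: clopenT | move=> y []].
apply/QO => C cC Cx; apply: closed_Fz; first by case: cC.
by exists C => // y [].
Qed.

Lemma quasi_component_sub_closed_cover x (A B : set X) :
  closed A -> closed B -> A `&` B = set0 ->
  quasi_component x `<=` A `|` B -> A x -> quasi_component x `<=` A.
Proof.
move=> cA cB AB0 QAB Ax.
have [D /set_nbhsP[W [oW AW WD]] clD_B] : filter_from (set_nbhs A) closure (~` B).
  apply: compact_normal => //; apply/set_nbhsP; exists (~` B).
  by split; [exact: closed_openC | exact/disjoints_subset | ].
pose V := ~` closure D.
have oV : open V by exact/closed_openC/closed_closure.
have BV : B `<=` V by move=> y By /clD_B.
have WV0 y : W y -> ~ V y by move=> Wy; apply; apply/subset_closure/WD.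
have [C [cC Cx CWV]] : exists C, [/\ clopen C, C x & C `<=` W `|` V].
  apply: clopen_sub_open_quasi_component; first exact: openU.
  by move=> y /QAB [/AW|/BV]; [left|right].
have cCW : clopen (C `&` ~` V).
  split; last by apply: closedI; [case: cC | rewrite setCK; exact: closed_closure].
  rewrite (_ : C `&` ~` V = C `&` W); first by apply: openI => //; case: cC.
  apply/seteqP; split=> y [Cy Wy]; split=> //; last exact: WV0.
  by case: (CWV y Cy).
move=> y Qy; have [Cy nVy] := Qy _ cCW (conj Cx (WV0 x (AW x Ax))).
by case: (QAB y Qy) => // /BV.
Qed.

Lemma quasi_component_connected x : connected (quasi_component x).
Proof.
move=> B [b Bb] [U oU BQU] [K cK BQK].
have cB : closed B by rewrite BQK; apply: closedI => //; exact: quasi_component_closed.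
have cQU : closed (quasi_component x `&` ~` U).
  by apply: closedI; [exact: quasi_component_closed | exact: open_closedC].
have QB y : quasi_component x y -> B y \/ (quasi_component x `&` ~` U) y.
  by move=> Qy; have [Uy|nUy] := pselect (U y); [left; rewrite BQU | right].
have BQU0 : B `&` (quasi_component x `&` ~` U) = set0.
  by apply/seteqP; split=> // y; rewrite BQU => -[[_ Uy] [_]].
have [Bx|nBx] := pselect (B x).
  apply/seteqP; split; first by rewrite BQU => y [].
  exact: quasi_component_sub_closed_cover cB cQU BQU0 QB Bx.
have QUx : (quasi_component x `&` ~` U) x.
  by split=> [//|Ux]; apply: nBx; rewrite BQU; split.
have QB' : quasi_component x `<=` (quasi_component x `&` ~` U) `|` B.
  by move=> y /QB [By|QUy]; [right|left].
have := quasi_component_sub_closed_cover cQU cB _ QB' QUx.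
rewrite setIC => /(_ BQU0).
by move: Bb; rewrite BQU => -[Qb Ub] /(_ b Qb) [].
Qed.

Lemma compact_totally_disconnected_zero_dimensional :
  totally_disconnected [set: X] -> zero_dimensional X.
Proof.
move=> tdX x y xy; apply: contrapT => noC.
have Qy : quasi_component x y.
  move=> C cC Cx; apply: contrapT => nCy; apply: noC; exists C; split=> //.
have Qx : quasi_component x x by [].
have := connected_component_max Qx (@subsetT _ _) (@quasi_component_connected x) Qy.
by rewrite tdX // => yx; rewrite yx eqxx in xy.
Qed.

End QuasiComponent.

Section UnitCircle.
Context {R : realType}.
Implicit Types (a b t : R) (z : R[i]).

Lemma expi2piD a b : expi2pi (a + b) = expi2pi a * expi2pi b.
Proof. by rewrite /expi2pi mulrDr cosD sinD /=; congr Complex; ring. Qed.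

Lemma expi2pi0 : expi2pi 0 = 1 :> R[i].
Proof. by rewrite /expi2pi mulr0 cos0 sin0. Qed.

Lemma expi2pi1 : expi2pi 1 = 1 :> R[i].
Proof. by rewrite /expi2pi mulr1 mulr_natl cos2pi sin2pi. Qed.

Lemma expi2pi_intr (n : int) : expi2pi n%:~R = 1 :> R[i].
Proof.
have expi2pi_natr k : expi2pi k%:R = 1 :> R[i].
  by elim: k => [|k IHk]; rewrite ?expi2pi0 // -addn1 natrD expi2piD IHk expi2pi1 mulr1.
case: n => k; first exact: expi2pi_natr.
have : expi2pi (Negz k)%:~R * expi2pi k.+1%:R = 1 :> R[i].
  by rewrite -expi2piD NegzE intrN addNr expi2pi0.
by rewrite expi2pi_natr mulr1.
Qed.

Lemma normc_eq1 z : `|z| = 1 <-> complex.Re z ^+ 2 + complex.Im z ^+ 2 = 1.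
Proof.
rewrite normc_def; split => [/(congr1 (@complex.Re R)) /=|->]; last by rewrite sqrtr1.
by move/eqP; rewrite -{1}sqrtr1 eqr_sqrt ?addr_ge0 ?sqr_ge0 // => /eqP.
Qed.

Lemma norm_expi2pi t : `|expi2pi t| = 1.
Proof. by apply/normc_eq1; rewrite cos2Dsin2. Qed.

Lemma cos_eq1_within_pi a : - pi <= a <= pi -> cos a = 1 -> a = 0.
Proof.
move=> /andP[Na aN] cos1; apply/normr0_eq0/cos_inj.
- by rewrite in_itv /= normr_ge0 ler_norml Na aN.
- by rewrite in_itv /= lexx pi_ge0.
- by rewrite cos_norm cos1 cos0.
Qed.

Lemma expi2pi_eq1 t : expi2pi t = 1 -> exists n : int, t = n%:~R.
Proof.
move=> et1; set n := Num.floor (t + 1/2); exists n.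
have /andP[nt tn] := Num.Theory.floor_itv (t + 1/2); rewrite -/n intrD rmorph1 in tn.
suff : 2 * pi * (t - n%:~R) = 0.
  by move/eqP; rewrite mulf_eq0 subr_eq0 mulf_eq0 pnatr_eq0 (gt_eqF (pi_gt0 R)) => /eqP.
apply: cos_eq1_within_pi.
  have pi_gt0 := @pi_gt0 R; apply/andP; split; nra.
have : expi2pi (t - n%:~R) * expi2pi n%:~R = 1 by rewrite -expi2piD subrK.
by rewrite expi2pi_intr mulr1 => -[].
Qed.

Lemma expi2piDz t (n : int) : expi2pi (t + n%:~R) = expi2pi t.
Proof. by rewrite expi2piD expi2pi_intr mulr1. Qed.

Lemma expi2pi_eq1_window t : -2 < t < 1 -> expi2pi t = 1 -> t = 0 \/ t = -1.
Proof.
move=> t_itv /expi2pi_eq1 [n tn]; move: t_itv.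
rewrite tn -[-2]/((-2)%:~R) !ltr_int ltrz1 => /andP[? ?].
have [->|->] : n = 0 \/ n = -1 by lia.
  by left.
by right.
Qed.

Lemma mul2piK t : 2 * pi * (t / (2 * pi)) = t :> R.
Proof. by rewrite mulrC divfK // mulf_neq0 ?pnatr_eq0 ?(gt_eqF (pi_gt0 R)). Qed.

Lemma expi2pi_surj z : `|z| = 1 -> exists2 a, 0 <= a <= 1 & expi2pi a = z.
Proof.
case: z => c s /normc_eq1 /= cs1.
have pi_gt0 := pi_gt0 R.
have c_itv : -1 <= c <= 1.
  have : c ^+ 2 <= 1 by rewrite -cs1 lerDl sqr_ge0.
  by move=> c2; apply/andP; split; nra.
have sqrt_s : Num.sqrt (1 - c ^+ 2) = `|s| by rewrite -cs1 addrC addKr sqrtr_sqr.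
have acos_ge0 := acos_ge0 c_itv; have acos_le := acos_lepi c_itv.
have acosK' : cos (acos c) = c by rewrite acosK // in_itv.
have [s_ge0|s_lt0] := lerP 0 s.
  exists (acos c / (2 * pi)); first by apply/andP; split;
    [apply: divr_ge0 => //; lra | rewrite ler_pdivrMr ?mul1r; lra].
  by rewrite /expi2pi mul2piK acosK' sin_acos // sqrt_s ger0_norm.
exists (1 - acos c / (2 * pi)).
  apply/andP; split; last by rewrite lerBlDr lerDl; apply: divr_ge0 => //; lra.
  by rewrite subr_ge0 ler_pdivrMr ?mul1r; lra.
rewrite /expi2pi mulrBr mulr1 mul2piK addrC mulr_natl.
by rewrite cosD2pi sinD2pi cosN sinN acosK' sin_acos // sqrt_s ltr0_norm ?opprK.
Qed.

Lemma expi2pi_atan z : 0 < complex.Re z -> `|z| = 1 ->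
  expi2pi (atan (complex.Im z / complex.Re z) / (2 * pi)) = z.
Proof.
case: z => c s /= c_gt0 /normc_eq1 /= cs1; rewrite /expi2pi mul2piK.
have c_neq0 := lt0r_neq0 c_gt0.
have cos_atan_c : cos (atan (s / c)) = c.
  rewrite cos_atan.
  have -> : 1 + (s / c) ^+ 2 = c^-1 ^+ 2.
    have -> : 1 + (s / c) ^+ 2 = (c ^+ 2 + s ^+ 2) / c ^+ 2 by field.
    by rewrite cs1 div1r exprVn.
  by rewrite sqrtr_sqr ger0_norm ?invrK // invr_ge0 ltW.
have := atanK (s / c); rewrite /tan cos_atan_c => tan_eq.
by rewrite -[sin _](divfK c_neq0) tan_eq divfK.
Qed.

Lemma atan_div2pi_near0 (d : R) : 0 < d ->
  exists2 eta : R, 0 < eta & forall q, `|q| < eta -> `|atan q / (2 * pi)| < d.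
Proof.
move=> d_gt0; have /cvgrPdist_lt /(_ d d_gt0) /nbhs_ballP [eta /= eta_gt0 small] :=
  @continuous_atan R 0.
exists eta => // q q_small; have := small q; rewrite /ball /= atan0 !sub0r !normrN.
move=> /(_ q_small); apply: le_lt_trans.
have two_pi_gt0 : 0 < 2 * pi :> R by rewrite mulr_gt0 ?pi_gt0.
rewrite normrM normfV (gtr0_norm two_pi_gt0) ler_pdivrMr //.
by have := normr_ge0 (atan q); have := pi_ge2 R; nra.
Qed.

Lemma mulcJ_unit z : `|z| = 1 -> z * conjc z = 1.
Proof.
case: z => a b /normc_eq1 /= ab1; apply/eqP; rewrite eq_complex /=.
by rewrite mulrN opprK -!expr2 ab1 eqxx /= mulrN mulrC addNr.
Qed.

Lemma mulcJ_unit_near z0 z1 (e : R) : `|z0| = 1 -> `|z1| = 1 -> e <= 1/2 ->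
  `|complex.Re z1 - complex.Re z0| < e -> `|complex.Im z1 - complex.Im z0| < e ->
  let w := z1 * conjc z0 in
  [/\ `|w| = 1, 3/4 <= complex.Re w & `|complex.Im w| <= 2 * e].
Proof.
case: z0 z1 => [c0 s0] [c1 s1] /normc_eq1 /= u0 /normc_eq1 /= u1 e_le.
rewrite !ltr_norml => /andP[? ?] /andP[? ?] /=.
have /andP[? ?] : -1 <= c0 <= 1 by apply/andP; split; nra.
have /andP[? ?] : -1 <= s0 <= 1 by apply/andP; split; nra.
split.
- apply/normc_eq1 => /=.
  have -> : (c1 * c0 - s1 * - s0) ^+ 2 + (c1 * - s0 + s1 * c0) ^+ 2 =
    (c1 ^+ 2 + s1 ^+ 2) * (c0 ^+ 2 + s0 ^+ 2) by ring.
  by rewrite u0 u1 mulr1.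
- have -> : c1 * c0 - s1 * - s0 =
      ((c0 ^+ 2 + s0 ^+ 2) + (c1 ^+ 2 + s1 ^+ 2)
       - ((c1 - c0) ^+ 2 + (s1 - s0) ^+ 2)) / 2.
    by field.
  rewrite u0 u1; nra.
- rewrite ler_norml; apply/andP; split; nra.
Qed.

End UnitCircle.

Section ClopenPatch.
Context {X : ptopologicalType} {Y : topologicalType} {D : X -> set X} {b : X -> X -> Y}.
Hypothesis clopenD : forall x, clopen (D x).
Hypothesis b_cont : forall x y, D x y -> {for y, continuous (b x)}.

Lemma near_eq_continuous_at (f g : X -> Y) y : (\forall z \near y, f z = g z) ->
  {for y, continuous g} -> {for y, continuous f}.
Proof.
move=> fg; rewrite /prop_for /continuous_at (nbhs_singleton fg) => gy.
by apply: cvg_trans gy; apply: near_eq_cvg; apply: filterS fg.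
Qed.

(* The first piece [D x] of [s] containing [y] decides the value at [y]; the
   default [b y y] is never used on points covered by [s]. *)
Definition patch (s : seq X) (y : X) : Y :=
  foldr (fun x acc => if y \in D x then b x y else acc) (b y y) s.

Lemma patchE s y : (exists2 x, x \in s & D x y) ->
  exists2 x, D x y & patch s y = b x y.
Proof.
elim: s => [|x s IHs] [x' /[!inE]]; first by [].
have [Dxy _ _|nDxy /orP[/eqP -> //|x's Dx'y]] := pselect (D x y).
  by exists x => //; rewrite /patch /= mem_set.
by rewrite /patch /= memNset //; apply: IHs; exists x'.
Qed.

Lemma patch_continuous_at s y : (exists2 x, x \in s & D x y) ->
  {for y, continuous (patch s)}.
Proof.
elim: s => [|x s IHs] [x' /[!inE]]; first by [].
have [Dxy _ _|nDxy x'_in Dx'y] := pselect (D x y).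
  apply: near_eq_continuous_at (b_cont Dxy).
  apply: filterS (open_nbhs_nbhs (conj (clopenD x).1 Dxy)) => z Dxz.
  by rewrite /patch /= mem_set.
apply: near_eq_continuous_at (IHs _); last first.
  by exists x' => //; case/orP: x'_in => // /eqP x'x; rewrite x'x in Dx'y.
have oDC : open (~` D x) by apply: closed_openC; case: (clopenD x).
apply: filterS (open_nbhs_nbhs (conj oDC nDxy)) => z nDxz.
by rewrite /patch /= memNset.
Qed.

Lemma compact_clopen_patch : compact [set: X] -> (forall x, D x x) ->
  exists g : X -> Y, continuous g /\ forall y, exists2 x, D x y & g y = b x y.
Proof.
move=> + Dxx; rewrite compact_cover.
move=> /(_ X setT D (fun x _ => (clopenD x).1) (fun y _ => ex_intro2 _ _ y I (Dxx y))).
move=> [s _ cover_s]; have {}cover_s y : exists2 x, x \in s & D x y.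
  by have [x xs Dxy] := cover_s y I; exists x.
exists (patch s); split=> [y|y]; first exact: patch_continuous_at.
exact: patchE.
Qed.

End ClopenPatch.

Section CircleLift.
Context {R : realType} {X : ptopologicalType}.

Lemma ccontinuous_mulr (g : X -> R[i]) (c : R[i]) :
  ccontinuous g -> ccontinuous (fun y => g y * c).
Proof.
case: c => a b.
have ReM z : complex.Re (z * Complex a b) = complex.Re z * a - complex.Im z * b.
  by case: z.
have ImM z : complex.Im (z * Complex a b) = complex.Re z * b + complex.Im z * a.
  by case: z.
case=> cRe cIm; split=> y; rewrite /continuous_at.
  under eq_fun do rewrite ReM; rewrite ReM.
  exact: cvgB (cvgM (cRe y) (cvg_cst _)) (cvgM (cIm y) (cvg_cst _)).
under eq_fun do rewrite ImM; rewrite ImM.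
exact: cvgD (cvgM (cRe y) (cvg_cst _)) (cvgM (cIm y) (cvg_cst _)).
Qed.

Variable f : X -> R[i].
Hypotheses (hX : hausdorff_space X) (cX : compact [set: X]) (zX : zero_dimensional X).
Hypotheses (f_cont : ccontinuous f) (f_unit : forall x, `|f x| = 1).

Lemma local_circle_lift x0 (d : R) : 0 < d -> exists D : set X, exists b : X -> R,
  [/\ clopen D, D x0 & forall y, D y ->
    [/\ {for y, continuous b}, expi2pi (b y) = f y & - d < b y < 1 + d]].
Proof.
move=> d_gt0; have [eta eta_gt0 atan_small] := atan_div2pi_near0 d_gt0.
pose e := Num.min (1/2) (eta / 4).
have e_gt0 : 0 < e by rewrite lt_min; apply/andP; split; lra.
have [e_le e_eta] : e <= 1/2 /\ e <= eta / 4 by rewrite /e !ge_min !lexx orbT.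
pose W := [set y | `|complex.Re (f y) - complex.Re (f x0)| < e /\
                   `|complex.Im (f y) - complex.Im (f x0)| < e].
have W_nbhs : nbhs x0 W.
  have near_x0 (g : X -> R) : continuous g -> \forall y \near x0, `|g y - g x0| < e.
    move=> /(_ x0) /cvgrPdist_lt /(_ e e_gt0); apply: filterS => y.
    by rewrite distrC.
  by apply: filterS (filterI (near_x0 _ f_cont.1) (near_x0 _ f_cont.2)) => y [].
have [D [Dx0 clopenD] DW] := zero_dimensional_cvg hX zX cX W_nbhs.
have [a0 a0_itv ea0] := expi2pi_surj (f_unit x0).
pose w y := f y * conjc (f x0).
have [w_Re w_Im] := ccontinuous_mulr (conjc (f x0)) f_cont.
have w_near y : D y -> [/\ `|w y| = 1, 3/4 <= complex.Re (w y) &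
    `|complex.Im (w y)| <= 2 * e].
  by move=> /DW [? ?]; exact: mulcJ_unit_near.
exists D, (fun y => a0 + atan (complex.Im (w y) / complex.Re (w y)) / (2 * pi)).
split=> // y /w_near [w1 Re_ge Im_le]; have Re_gt0 : 0 < complex.Re (w y) by lra.
split.
- apply: cvgD; first exact: cvg_cst.
  apply: cvgM; last exact: cvg_cst.
  apply: (@continuous_comp _ _ _ (fun z => complex.Im (w z) / complex.Re (w z))).
    exact: cvgM (w_Im y) (cvgV (lt0r_neq0 Re_gt0) (w_Re y)).
  exact: continuous_atan.
- rewrite expi2piD ea0 expi2pi_atan // /w mulrCA.
  by rewrite mulcJ_unit // mulr1.
- have q_small : `|complex.Im (w y) / complex.Re (w y)| < eta.
    rewrite normrM normfV (gtr0_norm Re_gt0) ltr_pdivrMr //.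
    have : eta * (3/4) <= eta * complex.Re (w y) by rewrite ler_pM2l.
    lra.
  move: (atan_small _ q_small) a0_itv; rewrite ltr_norml => /andP[? ?] /andP[? ?].
  by apply/andP; split; lra.
Qed.

Lemma circle_lift (d : R) : 0 < d -> exists g : X -> R,
  [/\ continuous g, forall y, expi2pi (g y) = f y & forall y, - d < g y < 1 + d].
Proof.
move=> d_gt0.
have /choice [D /choice [b lift_b]] := fun x0 => local_circle_lift x0 d_gt0.
have clopenD x : clopen (D x) by case: (lift_b x).
have Dxx x : D x x by case: (lift_b x).
have b_spec x y : D x y ->
    [/\ {for y, continuous (b x)}, expi2pi (b x y) = f y & - d < b x y < 1 + d].
  by case: (lift_b x) => _ _; apply.
have b_cont x y : D x y -> {for y, continuous (b x)} by move=> /b_spec [].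
have [g [g_cont g_patch]] := compact_clopen_patch clopenD b_cont cX Dxx.
by exists g; split=> // y; have [x /b_spec [_ ? ?] ->] := g_patch y.
Qed.

End CircleLift.

Section EigenvalueCoboundary.
Context {R : realType}.

Lemma ccontinuous_expi2pi (X : topologicalType) (F : X -> R) :
  continuous F -> ccontinuous (fun x => expi2pi (F x)).
Proof.
move=> F_cont; have c2piF : continuous (fun x => 2 * pi * F x).
  by move=> x; apply: cvgM; [exact: cvg_cst | exact: F_cont].
by split=> x; apply: continuous_comp (c2piF x) _;
  [exact: continuous_cos | exact: continuous_sin].
Qed.

Lemma coboundary_continuous_eigenvalue (X : topologicalType) (T : X -> X)
    (theta : R) (U : set X) :
  real_coboundary T (fun x => \1_U x - theta) ->
  continuous_eigenvalue T (expi2pi theta).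
Proof.
move=> [F [F_cont cob]]; exists (fun x => expi2pi (F x)).
split=> [|x|x]; [exact: ccontinuous_expi2pi | exact: norm_expi2pi |].
have -> : F (T x) = theta + F x + (- (x \in U)%:Z)%:~R.
  by rewrite intrN -[in RHS](subrK (F (T x)) (F x)) -cob indicE; ring.
by rewrite expi2piDz expi2piD.
Qed.

Lemma continuous_eigenvalue_coboundary (X : ptopologicalType) (T : X -> X)
    (theta : R) :
  hausdorff_space X -> compact [set: X] -> zero_dimensional X ->
  continuous T -> 0 < theta < 1 ->
  continuous_eigenvalue T (expi2pi theta) ->
  exists U : set X, clopen U /\ real_coboundary T (fun x => \1_U x - theta).
Proof.
move=> hX cX zX T_cont /andP[theta_gt0 theta_lt1] [f [f_cont f_unit f_eig]].
pose d := Num.min theta (1 - theta) / 2.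
have [d_gt0 d_le] : 0 < d /\ 2 * d <= Num.min theta (1 - theta).
  by rewrite /d divr_gt0 ?lt_min ?theta_gt0 ?subr_gt0 //; split=> //; lra.
have [d_theta d_1theta] : 2 * d <= theta /\ 2 * d <= 1 - theta.
  by move: d_le; rewrite le_min => /andP[].
have [g [g_cont g_f g_itv]] := circle_lift hX cX zX f_cont f_unit d_gt0.
pose h x := g (T x) - g x - theta.
have h_cont : continuous h.
  move=> x; apply: cvgB; last exact: cvg_cst.
  by apply: cvgB; [exact: continuous_comp (T_cont x) (g_cont _) | exact: g_cont].
have h_vals x : h x = 0 \/ h x = -1.
  apply: expi2pi_eq1_window.
    have := g_itv x; have := g_itv (T x); move=> /andP[? ?] /andP[? ?].
    by apply/andP; split; rewrite /h; lra.
  apply: (mulIf (mulf_neq0 _ _ : expi2pi theta * f x != 0)).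
  - by rewrite -normr_eq0 norm_expi2pi oner_neq0.
  - by rewrite -normr_eq0 f_unit oner_neq0.
  have lam_f : expi2pi theta * f x = expi2pi (theta + g x) by rewrite expi2piD g_f.
  rewrite mul1r lam_f -expi2piD -lam_f -f_eig -g_f; congr expi2pi; rewrite /h; ring.
pose U := h @^-1` [set r | r < - (1/2)].
have UE : U = h @^-1` [set r | r <= - (1/2)].
  by apply/seteqP; split=> x; rewrite /U /=; case: (h_vals x) => ->; lra.
exists U; split.
  split; first by apply: open_comp; [move=> ? _; exact: h_cont | exact: open_lt].
  by rewrite UE; apply: preimage_closed; [move=> ? _; exact: h_cont | exact: closed_le].
exists g; split=> // x; rewrite indicE.
have [hx|hx] := h_vals x.
  rewrite memNset /=; last by rewrite /U /= hx; lra.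
  by move: hx; rewrite /h; lra.
rewrite mem_set /=; last by rewrite /U /= hx; lra.
by move: hx; rewrite /h; lra.
Qed.

End EigenvalueCoboundary.

Lemma coboundary_iter_sum (V : zmodType) (Y : Type) (T : Y -> Y) (g F : Y -> V) :
  (forall x, g x = F x - F (T x)) ->
  forall n x, \sum_(k < n) g (iter k T x) = F x - F (iter n T x).
Proof.
move=> cob; elim=> [|n IHn] x; first by rewrite big_ord0 subrr.
by rewrite big_ord_recr /= IHn cob -iterS addrA subrK.
Qed.

Lemma eq0_natmul_bounded (R : archiRealFieldType) (e B : R) :
  (forall n, `|e| *+ n <= B) -> e = 0.
Proof.
move=> bounded; apply/eqP; apply: contraT => e_neq0.
have e_gt0 : 0 < `|e| by rewrite normr_gt0.
have := bounded (Num.truncn (B / `|e|)).+1.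
by rewrite -mulr_natr mulrC -ler_pdivlMr // leNgt truncnS_gt.
Qed.

Section ProbabilityBounds.
Context {d} {Y : measurableType d} {R : realType} (P : probability Y R).
Local Open Scope ereal_scope.

Lemma integral_sum_indic (A : nat -> set Y) n : (forall k, measurable (A k)) ->
  \int[P]_x (\sum_(k < n) \1_(A k) x)%:E = \sum_(k < n) P (A k).
Proof.
move=> mA; rewrite (eq_integral (fun x => \sum_(k < n) (\1_(A k) x)%:E)); last first.
  by move=> x _; rewrite sumEFin.
rewrite ge0_integral_sum //; last first.
  by move=> k; apply/measurable_EFinP; exact: measurable_indic.
by apply: eq_bigr => k _; rewrite integral_indic // setIT.
Qed.

Lemma integral_probability_bounds (f : Y -> R) (a b : R) :
  measurable_fun setT f -> (forall x, 0 <= f x)%R -> (forall x, a <= f x <= b)%R ->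
  a%:E <= \int[P]_x (f x)%:E <= b%:E.
Proof.
move=> mf f_ge0 f_ab.
have mfE : measurable_fun setT (fun x => (f x)%:E) by exact/measurable_EFinP.
have cst_integral (r : R) : \int[P]_x (cst r%:E) x = r%:E.
  by rewrite integral_cst // -[RHS]mule1; congr (_ * _); exact: probability_setT.
apply/andP; split.
  have [a_le0|a_gt0] := leP a 0%R.
    apply: (@le_trans _ _ 0); first by rewrite lee_fin.
    by apply: integral_ge0 => x _; rewrite lee_fin.
  rewrite -[X in X <= _]cst_integral; apply: ge0_le_integral => //.
  - by move=> x _; rewrite lee_fin ltW.
  - by move=> x _; rewrite lee_fin; case/andP: (f_ab x).
rewrite -cst_integral; apply: ge0_le_integral => //.
- by move=> x _; rewrite lee_fin.
- by move=> x _; rewrite lee_fin; case/andP: (f_ab x).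
Qed.

End ProbabilityBounds.

Lemma compact_continuous_bounded (R : realType) (X : topologicalType) (F : X -> R) :
  compact [set: X] -> continuous F -> exists M, forall x, `|F x| <= M.
Proof.
move=> cX F_cont.
have [M [_ M_bound]] :=
  compact_bounded (continuous_compact (continuous_subspaceT F_cont) cX).
by exists (M + 1) => x; apply: (M_bound (M + 1)); [lra | exists x].
Qed.

Lemma continuous_iter (X : topologicalType) (T : X -> X) k :
  continuous T -> continuous (iter k T).
Proof.
move=> T_cont; elim: k => [|k IHk] x; first exact: cvg_id.
exact: (@continuous_comp _ _ _ (iter k T) T _ (IHk x) (T_cont _)).
Qed.

Section InvariantMeasure.
Context {R : realType} {X : ptopologicalType} {T : X -> X}.
Context {mu : probability (borel_type X) R}.
Hypotheses (T_cont : continuous T) (mu_inv : T_invariant T mu).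

Lemma invariant_iter_open (A : set X) k : open A -> mu (iter k T @^-1` A) = mu A.
Proof.
move=> oA; elim: k => // k IHk.
have -> : iter k.+1 T @^-1` A = T @^-1` (iter k T @^-1` A).
  by apply/funext => x; rewrite /preimage /= -iterS iterSr.
rewrite mu_inv ?IHk //; apply: sub_sigma_algebra; apply: open_comp => // x _.
by apply: continuous_iter.
Qed.

Lemma coboundary_indic_measure (U : set X) (theta : R) :
  compact [set: X] -> open U -> real_coboundary T (fun x => \1_U x - theta) ->
  mu U = theta%:E.
Proof.
move=> cX oU [F [F_cont cob]]; have [M F_le] := compact_continuous_bounded cX F_cont.
pose A k := iter k T @^-1` U.
have mA k : measurable (A k : set (borel_type X)).
  by apply: sub_sigma_algebra; apply: open_comp => // x _; apply: continuous_iter.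
have muUE : mu U = (fine (mu U))%:E.
  by rewrite fineK // fin_num_measure //; exact: (mA 0).
set r := fine (mu U).
have Birkhoff n x : \sum_(k < n) \1_(A k) x = theta *+ n + (F x - F (iter n T x)).
  rewrite -(coboundary_iter_sum cob) sumrB sumr_const card_ord addrC subrK.
  by apply: eq_bigr => k _; rewrite !indicE.
have integral_Birkhoff n : (\int[mu]_x (\sum_(k < n) \1_(A k) x)%:E = (r *+ n)%:E)%E.
  rewrite integral_sum_indic // (eq_bigr (fun=> r%:E)); last first.
    by move=> k _; rewrite invariant_iter_open.
  by rewrite sumEFin sumr_const card_ord.
rewrite muUE -/r; congr EFin; apply/eqP; rewrite -subr_eq0; apply/eqP.
apply: (@eq0_natmul_bounded _ _ (2 * M)) => n.
have /andP[lo up] : ((theta *+ n - 2 * M)%:E <=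
    \int[mu]_x (\sum_(k < n) \1_(A k) x)%:E <= (theta *+ n + 2 * M)%:E)%E.
  apply: integral_probability_bounds => [|x|x].
  - by apply: measurable_sum => k; exact: measurable_indic.
  - by apply: sumr_ge0 => k _; rewrite indicE.
  have := F_le x; have := F_le (iter n T x); rewrite Birkhoff !ler_norml.
  by move=> /andP[? ?] /andP[? ?]; apply/andP; split; lra.
rewrite integral_Birkhoff !lee_fin in lo up.
by rewrite -normrMn mulrnBl ler_norml; apply/andP; split; lra.
Qed.

End InvariantMeasure.

Theorem mainTheorem1 (R : realType) (X : pseudoPMetricType R) (T : X -> X)
  (theta : R) :
  hausdorff_space X ->
  compact [set: X] ->
  totally_disconnected [set: X] ->
  homeomorphism T ->
  top_transitive T ->
  0 < theta < 1 ->
  (continuous_eigenvalue T (expi2pi theta) <->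
     exists U : set X, clopen U /\
       real_coboundary T (fun x => \1_U x - theta))
  /\
  (forall U : set X, clopen U ->
     real_coboundary T (fun x => \1_U x - theta) ->
     forall mu : probability (borel_type X) R, T_invariant T mu ->
       mu U = theta%:E).
Proof.
move=> hX cX tdX [T_cont _] _ theta_itv.
have zX := compact_totally_disconnected_zero_dimensional hX cX tdX.
split; first split.
- exact: continuous_eigenvalue_coboundary.
- by move=> [U [_ cob]]; exact: coboundary_continuous_eigenvalue cob.
- move=> U [oU _] cob mu mu_inv; exact: coboundary_indic_measure.
Qed.
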